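(* Let $2\le n<d$ with $n=2$ or $n$ odd, let $t$ be as defined below, let $E\in\mathrm{SL}(d,q)$ and $T:=E^{-1}tE$. If $T$ is a weak doubling element, then $V_n+V_nT=V_n+V_nT^{-1}$.
   Context: Vectors are row vectors and matrices act from the right; $\mathrm{Fix}(g)=\{x\in\mathbb{F}_q^d: xg=x\}$. $e_1,\dots,e_d$ is the standard basis of $V=\mathbb{F}_q^d$, $V_n=\langle e_1,\dots,e_n\rangle$, $F_{d-n}=\langle e_{n+1},\dots,e_d\rangle$, and $n'=\min\{2n-1,d\}$. An element $c\in\mathrm{GL}(d,q)$ is a weak doubling element if (C1) $\dim(V_n+V_nc)=n'$ and (C2) if $n'<d$ then $\dim(F_{d-n}+\mathrm{Fix}(c))=d$. $E_{i,j}(\lambda)$ is the identity matrix with $(i,j)$ entry replaced by $\lambda$ ($i\ne j$). Here $q=p^f$. The element $t$ is: $E_{1,2}(1)$ if $n=2$; $\operatorname{diag}(z_1,I_{d-n})$ if $n>2$ and $p=2$; $\operatorname{diag}(z_2,I_{d-n})$ if $n>2$ and $p$ odd, where ($P_\sigma$ being the $n\times n$ matrix with $e_iP_\sigma=e_{\sigma(i)}$) $z_1=P_{(1,n,n-1,\dots,2)}$ with $(1,n)$ entry changed to $-1$ if $n$ is even, and $z_2=P_{(2,n,n-1,\dots,3)}$ with $(2,n)$ entry changed to $-1$ if $n$ is odd. *)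

From HB Require Import structures.
From mathcomp Require Import all_boot all_order all_algebra all_fingroup all_field.
Set Implicit Arguments. Unset Strict Implicit. Unset Printing Implicit Defensive.
Import GRing.Theory.
Local Open Scope ring_scope.

(* Indices are 0-based: paper's e_k is row index k-1. *)
Section Defs.
Variable F : fieldType.

(* V_n = <e_1..e_n> as a row-space (square matrix whose rows span it) *)
Definition Vsp (d n : nat) : 'M[F]_d := \matrix_(i, j) ((i == j) && (i < n)%N)%:R.
Definition Fsp (d n : nat) : 'M[F]_d := \matrix_(i, j) ((i == j) && (n <= i)%N)%:R.
Definition Fixsp (d : nat) (g : 'M[F]_d) : 'M[F]_d := kermx (g - 1%:M).
Definition nprime (d n : nat) : nat := minn (2 * n - 1) d.

Definition weak_doubling (d n : nat) (c : 'M[F]_d) : Prop :=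
  \rank (Vsp d n + Vsp d n *m c)%MS = nprime d n /\
  ((nprime d n < d)%N -> \rank (Fsp d n + Fixsp c)%MS = d).

(* permutations (0-based) of the paper: sigma1 = (1,n,n-1,...,2), sigma2 = (2,n,n-1,...,3) *)
Definition sigma1 (n i : nat) : nat := if i == 0%N then n.-1 else i.-1.
Definition sigma2 (n i : nat) : nat :=
  if i == 0%N then 0%N else if i == 1%N then n.-1 else i.-1.

Definition z1 (n : nat) : 'M[F]_n := \matrix_(i, j)
  if (i == 0%N :> nat) && (j == n.-1 :> nat) then (if ~~ odd n then -1 else 1)
  else (j == sigma1 n i :> nat)%:R.
Definition z2 (n : nat) : 'M[F]_n := \matrix_(i, j)
  if (i == 1%N :> nat) && (j == n.-1 :> nat) then (if odd n then -1 else 1)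
  else (j == sigma2 n i :> nat)%:R.

(* diag(z, I_{d-n}) for z : 'M_n *)
Definition blockdiag (d n : nat) (z : 'M[F]_n) : 'M[F]_d := \matrix_(i, j)
  match insub (val i : nat), insub (val j : nat) with
  | Some i', Some j' => z i' j'
  | _, _ => (i == j)%:R
  end.

Definition E12one (d : nat) : 'M[F]_d :=
  \matrix_(i, j) (((i == j) || ((i == 0%N :> nat) && (j == 1%N :> nat))))%:R.

Definition tElt (d n : nat) : 'M[F]_d :=
  if n == 2%N then E12one d
  else if 2 \in [pchar F] then blockdiag d (z1 n)
  else blockdiag d (z2 n).
End Defs.

From HB Require Import structures.
From mathcomp Require Import all_boot all_order all_algebra all_fingroup all_field.
From mathcomp Require Import zify.
Import GRing.Theory.
Local Open Scope ring_scope.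
Set Implicit Arguments. Unset Strict Implicit.

(* Both [V_n T] and [V_n T^-1] lie in [S := V_n + Im (T - 1)]: indeed
   [V_n T <= V_n + V_n (T - 1)] and [V_n T^-1 <= V_n + V_n T^-1 (T - 1)].
   Since [T - 1] is conjugate to [t - 1], which has rank at most [n - 1] (for
   [n = 2] it is an elementary matrix; for odd [n] the block [z - 1] kills the
   all-ones vector if [z = z1], a permutation matrix, and [e_1] if [z = z2]), we
   get [dim S <= min (2n - 1, d) = dim (V_n + V_n T)] by (C1), so
   [V_n + V_n T = S]. Finally [V_n + V_n T^-1 = (V_n + V_n T) T^-1] has the
   same dimension and lies in [S], so it is [S] as well. Only (C1) and the
   invertibility of [E] are used. *)

Lemma mxrank_le_pred_of_lker (F : fieldType) m k (M : 'M[F]_(m, k)) (u : 'rV_m) :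
  u != 0 -> u *m M = 0 -> (\rank M <= m.-1)%N.
Proof.
move=> nz_u uM0; have : (\rank u <= \rank (kermx M))%N.
  by apply: mxrankS; rewrite sub_kermx uM0.
rewrite rank_rV nz_u mxrank_ker; have := rank_leq_row M; lia.
Qed.

Lemma mxrank_le_pred_of_row0 (F : fieldType) m k (M : 'M[F]_(m, k)) i :
  row i M = 0 -> (\rank M <= m.-1)%N.
Proof.
move=> Mi0; apply: (@mxrank_le_pred_of_lker _ _ _ _ (delta_mx 0 i)); last by rewrite -rowE.
by apply/eqP => /matrixP/(_ 0 i); rewrite !mxE !eqxx /= => /eqP; rewrite oner_eq0.
Qed.

Section PartialIdentity.
Variables (F : fieldType) (d n : nat).

Lemma mul_pid_mxE p (A : 'M[F]_(n, p)) (i : 'I_d) l :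
  (pid_mx n *m A) i l = oapp (fun i' => A i' l) 0 (insub (val i)).
Proof.
rewrite mxE; case: insubP => [i' _ /= val_i' | ge_i] /=.
  rewrite (bigD1 i') //= big1 ?addr0 => [|k ne_k]; rewrite mxE -val_i' ?eqxx ?ltn_ord ?mul1r //.
  have /negbTE-> : (i' : nat) != k by rewrite eq_sym; exact: ne_k.
  by rewrite mul0r.
by rewrite big1 // => k _; rewrite mxE (negbTE ge_i) andbF mul0r.
Qed.

Lemma mulmx_pid_mxE m (A : 'M[F]_(m, n)) i (j : 'I_d) :
  (A *m pid_mx n) i j = oapp (fun j' => A i j') 0 (insub (val j)).
Proof.
rewrite mxE; case: insubP => [j' _ /= val_j' | ge_j] /=.
  rewrite (bigD1 j') //= big1 ?addr0 => [|k ne_k]; rewrite mxE -val_j' ?eqxx ?ltn_ord ?mulr1 //.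
  have /negbTE-> : (k : nat) != j' := ne_k.
  by rewrite mulr0.
rewrite big1 // => k _; rewrite mxE ltn_ord andbT.
have /negbTE-> : (k : nat) != j by apply: contraNneq ge_j => eq_kj /=; rewrite -eq_kj.
by rewrite mulr0.
Qed.

Lemma blockdiag_subr1 (z : 'M[F]_n) :
  blockdiag d z - 1%:M = pid_mx n *m (z - 1%:M) *m pid_mx n.
Proof.
apply/matrixP => i j; rewrite mulmx_pid_mxE !mxE.
case: (insubP 'I_n (val j)) => [j' _ /= val_j'|_] /=; rewrite ?mul_pid_mxE.
all: case: insubP => [i' _ /= val_i'|_] /=; rewrite ?mxE ?subrr //.
by rewrite -[i == j]val_eqE /= -val_i' -val_j'.
Qed.

Lemma mxrank_blockdiag_subr1 (z : 'M[F]_n) :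
  (\rank (blockdiag d z - 1%:M)%R <= \rank (z - 1%:M)%R)%N.
Proof.
by rewrite blockdiag_subr1 (leq_trans (mxrankM_maxl _ _)) ?mxrankM_maxr.
Qed.

End PartialIdentity.

Section Doubling.
Variables (F : fieldType) (d m : nat) (V : 'M[F]_(m, d)) (T : 'M[F]_d).

Lemma addsmx_mulmx_sub_subr1 : (V + V *m T <= V + (T - 1%:M))%MS.
Proof.
have -> : V *m T = V + V *m (T - 1%:M) by rewrite mulmxBr mulmx1 addrC subrK.
by rewrite addsmx_sub addsmxSl addmx_sub ?addsmxSl // (submx_trans (submxMl _ _)) ?addsmxSr.
Qed.

Lemma addsmx_mul_invmx_sub_subr1 : (V + V *m invmx T <= V + (T - 1%:M))%MS.
Proof.
have [uT | /invmx_out-> //] := boolP (T \in unitmx); last exact: addsmx_mulmx_sub_subr1.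
have -> : invmx T = 1%:M - invmx T *m (T - 1%:M).
  by rewrite mulmxBr mulVmx // mulmx1 opprB addrC subrK.
rewrite addsmx_sub addsmxSl mulmxBr mulmx1 mulmxA.
by rewrite addmx_sub ?addsmxSl // eqmx_opp (submx_trans (submxMl _ _)) ?addsmxSr.
Qed.

Lemma mxrank_addsmx_mul_invmx : \rank (V + V *m invmx T) = \rank (V + V *m T).
Proof.
have [uT | /invmx_out-> //] := boolP (T \in unitmx).
have fT : row_free T by rewrite row_free_unit.
by rewrite -(mxrankMfree _ fT) addsmxMr -mulmxA mulVmx // mulmx1 addsmxC.
Qed.

Lemma addsmx_mulmx_eq_inv :
  (\rank (V + (T - 1%:M)%R)%MS <= \rank (V + V *m T)%MS)%N ->
  (V + V *m T == V + V *m invmx T)%MS.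
Proof.
move=> rk_le; have sub_fwd := addsmx_mulmx_sub_subr1.
have eq_fwd : (V + (T - 1%:M) <= V + V *m T)%MS.
  by rewrite -(mxrank_leqif_sup sub_fwd) eqn_leq rk_le mxrankS.
have sub_inv := submx_trans addsmx_mul_invmx_sub_subr1 eq_fwd.
by rewrite -(mxrank_leqif_sup sub_inv) mxrank_addsmx_mul_invmx eqxx sub_inv.
Qed.

End Doubling.

Lemma Vsp_pid_mx (F : fieldType) d n : Vsp F d n = pid_mx n.
Proof. by apply/matrixP => i j; rewrite !mxE. Qed.

Lemma mxrank_conjmx_subr1 (F : fieldType) d (E t : 'M[F]_d) : E \in unitmx ->
  (\rank (invmx E *m t *m E - 1%:M)%R <= \rank (t - 1%:M)%R)%N.
Proof.
move=> unit_E; have -> : invmx E *m t *m E - 1%:M = invmx E *m (t - 1%:M) *m E.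
  by rewrite mulmxBr mulmxBl mulmx1 mulVmx.
exact: leq_trans (mxrankM_maxl _ _) (mxrankM_maxr _ _).
Qed.

Section Generators.
Variables (F : fieldType) (n : nat).

Lemma z1_oddE : odd n -> forall i j : 'I_n, z1 F n i j = (j == sigma1 n i :> nat)%:R.
Proof.
move=> odd_n i j; rewrite mxE odd_n /=.
case: ifP => [/andP[/eqP i0 /eqP jn]|//]; by rewrite /sigma1 i0 jn !eqxx.
Qed.

Lemma z1_col_sum : odd n -> forall j : 'I_n, \sum_i z1 F n i j = 1.
Proof.
move=> odd_n j; have n_gt0 : (0 < n)%N := leq_ltn_trans (leq0n j) (ltn_ord j).
have lt_j := ltn_ord j.
rewrite (bigD1 (Ordinal (ltn_pmod j.+1 n_gt0))) //= big1 ?addr0 => [|i ne_i].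
  rewrite z1_oddE //=; have -> // : (j : nat) == sigma1 n (j.+1 %% n).
  apply/eqP; rewrite /sigma1; case: (ltnP j.+1 n) => [lt_Sj | ge_Sj].
    by rewrite modn_small.
  by rewrite (_ : j.+1 = n) ?modnn //=; lia.
have lt_i := ltn_ord i; move: ne_i; rewrite z1_oddE // -val_eqE /= /sigma1.
case: ifP => /eqP i0 ne_i; case: eqP => // j_eq; move: ne_i.
  by rewrite i0 (_ : j.+1 = n) ?modnn //; lia.
by rewrite j_eq modn_small; lia.
Qed.

Lemma mxrank_z1_subr1 : odd n -> (\rank (z1 F n - 1%:M)%R <= n.-1)%N.
Proof.
move=> odd_n; apply: (@mxrank_le_pred_of_lker _ _ _ _ (const_mx 1)).
  have n_gt0 : (0 < n)%N by case: n odd_n.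
  by apply/eqP => /rowP/(_ (Ordinal n_gt0)); rewrite !mxE; apply/eqP; rewrite oner_eq0.
rewrite mulmxBr mulmx1; apply/eqP; rewrite subr_eq0; apply/eqP/rowP => j.
rewrite [LHS]mxE (eq_bigr (fun i => z1 F n i j)) => [|i _]; last by rewrite mxE mul1r.
by rewrite z1_col_sum // mxE.
Qed.

Lemma mxrank_z2_subr1 : (0 < n)%N -> (\rank (z2 F n - 1%:M)%R <= n.-1)%N.
Proof.
move=> n_gt0; apply: (@mxrank_le_pred_of_row0 _ _ _ _ (Ordinal n_gt0)).
by apply/rowP => j; rewrite !mxE /sigma2 /= -val_eqE /= eq_sym subrr.
Qed.

Lemma mxrank_E12one_subr1 d : (1 < d)%N -> \rank (E12one F d - 1%:M)%R = 1%N.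
Proof.
move=> d_gt1; have d_gt0 : (0 < d)%N by lia.
suff -> : E12one F d - 1%:M = delta_mx (Ordinal d_gt0) (Ordinal d_gt1).
  exact: mxrank_delta.
by apply/matrixP => -[[|i] hi] [[|[|j]] hj]; rewrite !mxE /= ?orbF ?subrr ?subr0.
Qed.

End Generators.

Lemma mxrank_tElt_subr1 (F : fieldType) d n :
  (2 <= n)%N -> (n < d)%N -> (n == 2%N) || odd n ->
  (\rank (tElt F d n - 1%:M)%R <= n.-1)%N.
Proof.
move=> n_ge2 n_lt_d; rewrite /tElt; have [-> _ | ne2] := eqVneq n 2%N.
  by rewrite mxrank_E12one_subr1 //; lia.
move=> /= odd_n; case: ifP => _.
  exact: leq_trans (mxrank_blockdiag_subr1 d _) (mxrank_z1_subr1 F odd_n).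
by apply: leq_trans (mxrank_blockdiag_subr1 d _) (mxrank_z2_subr1 F _); lia.
Qed.

Theorem mainTheorem5 (F : finFieldType) (d n : nat)
  (hn2 : (2 <= n)%N) (hnd : (n < d)%N) (hn : (n == 2%N) || odd n)
  (E : 'M[F]_d) (hE : \det E = 1) :
  let T := invmx E *m tElt F d n *m E in
  weak_doubling n T ->
  (Vsp F d n + Vsp F d n *m T == Vsp F d n + Vsp F d n *m invmx T)%MS.
Proof.
move=> T [rank_doubling _]; have unit_E : E \in unitmx by rewrite unitmxE hE unitr1.
have rank_V : \rank (Vsp F d n) = n by rewrite Vsp_pid_mx rank_pid_mx // ltnW.
have rank_T : (\rank (T - 1%:M)%R <= n.-1)%N.
  exact: leq_trans (mxrank_conjmx_subr1 _ unit_E) (mxrank_tElt_subr1 F hn2 hnd hn).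
apply: addsmx_mulmx_eq_inv.
rewrite rank_doubling /nprime leq_min rank_leq_col andbT.
apply: leq_trans (mxrank_adds_leqif _ _).1 _.
by rewrite rank_V (leq_trans (leq_add (leqnn n) rank_T)) //; lia.
Qed.
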